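(* Fix $\theta>0$ and real parameters $\mu_b,\mu_c,\sigma_b^2,\sigma_c^2,\sigma_{bc}$ with $\sigma_{bc}>\mu_c$. For the snowdrift game described in the context, let $F_d$ denote the quantity $F$ for group size $d$. Then there exists $d_0\ge2$ such that $F_d>0$ for all $d\ge d_0$. That is, for interactions in large enough groups, weak selection favors the abundance of $C$ whenever $\sigma_{bc}>\mu_c$, for every $\theta>0$.
   Context: For integers $0\le k\le n$ and $\theta>0$ let $\psi_n^k=\frac{\prod_{i=1}^{k}(\theta+i-1)\prod_{j=1}^{n-k}(\theta+j-1)}{\prod_{l=1}^{n}(2\theta+l-1)}$ (empty products equal $1$). For group size $d\ge2$ and real arrays $\mu_{C,k},\mu_{D,k},\sigma_{CC,kl},\sigma_{CD,kl},\sigma_{DD,kl}$ ($k,l=0,\ldots,d-1$) define $$F=\sum_{k=0}^{d-1}\binom{d-1}{k}\psi_{d+1}^{k+1}(\mu_{C,k}-\mu_{D,k})+\sum_{k,l=0}^{d-1}\binom{d-1}{k}\binom{d-1}{l}\Big[-\psi_{2d+1}^{k+l+2}(\sigma_{CC,kl}-\sigma_{CD,kl})+\psi_{2d+1}^{k+l+1}(\sigma_{DD,kl}-\sigma_{CD,kl})\Big].$$ These arrays are the scaled means and second moments of the payoffs $a_k$ (cooperator) and $b_k$ (defector) with $k$ cooperating partners. In the paper's large-population weak-selection approximation, the average abundance of $C$ is $\tfrac12+\tfrac{\delta(1-u)}{u}F$, so weak selection favors the abundance of $C$ iff $F>0$. Snowdrift game: random benefit $b$ and cost $c$ have scaled moments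 $\mu_b,\mu_c,\sigma_b^2,\sigma_c^2,\sigma_{bc}$ (i.e. $E[b]=\mu_b\delta+o(\delta)$, $E[c]=\mu_c\delta+o(\delta)$, $E[b^2]=\sigma_b^2\delta+o(\delta)$, $E[c^2]=\sigma_c^2\delta+o(\delta)$, $E[bc]=\sigma_{bc}\delta+o(\delta)$). Payoffs are $a_k=b-\frac{c}{k+1}$, $b_0=0$, $b_k=b$ for $k\ge1$. Hence $\mu_{C,k}=\mu_b-\frac{\mu_c}{k+1}$, $\mu_{D,k}=\mu_b\mathbf 1_{\{k\ne0\}}$, $\sigma_{CC,kl}=\sigma_b^2-\big(\frac1{k+1}+\frac1{l+1}\big)\sigma_{bc}+\frac{\sigma_c^2}{(k+1)(l+1)}$, $\sigma_{DD,kl}=\sigma_b^2\mathbf 1_{\{k\ne0,\,l\ne0\}}$, $\sigma_{CD,kl}=\big(\sigma_b^2-\frac{\sigma_{bc}}{k+1}\big)\mathbf 1_{\{l\ne0\}}$. *)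

From HB Require Import structures.
From mathcomp Require Import all_boot all_order all_algebra.
From mathcomp Require Import reals.
Set Implicit Arguments. Unset Strict Implicit. Unset Printing Implicit Defensive.
Import Order.TTheory GRing.Theory Num.Theory.
Local Open Scope ring_scope.

Section Defs.
Variable R : realType.

(* psi_n^k = prod_{i=1}^k (theta+i-1) * prod_{j=1}^{n-k} (theta+j-1)
             / prod_{l=1}^n (2 theta + l - 1)   (used only for 0 <= k <= n) *)
Definition psi (theta : R) (n k : nat) : R :=
  (\prod_(i < k) (theta + i%:R)) * (\prod_(j < (n - k)%N) (theta + j%:R))
  / \prod_(l < n) (2 * theta + l%:R).

Definition Fgen (theta : R) (d : nat) (muC muD : nat -> R)
    (sCC sCD sDD : nat -> nat -> R) : R :=
  \sum_(k < d) ('C(d.-1, k))%:R * psi theta d.+1 k.+1 * (muC k - muD k)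
  + \sum_(k < d) \sum_(l < d) ('C(d.-1, k))%:R * ('C(d.-1, l))%:R *
      (- psi theta (2 * d).+1 (k + l).+2 * (sCC k l - sCD k l)
       + psi theta (2 * d).+1 (k + l).+1 * (sDD k l - sCD k l)).

Definition sd_muC (mub muc : R) (k : nat) : R := mub - muc / (k.+1)%:R.
Definition sd_muD (mub : R) (k : nat) : R := if k != 0%N then mub else 0.
Definition sd_sCC (sb2 sc2 sbc : R) (k l : nat) : R :=
  sb2 - ((k.+1)%:R^-1 + (l.+1)%:R^-1) * sbc + sc2 / ((k.+1)%:R * (l.+1)%:R).
Definition sd_sDD (sb2 : R) (k l : nat) : R :=
  if (k != 0%N) && (l != 0%N) then sb2 else 0.
Definition sd_sCD (sb2 sbc : R) (k l : nat) : R :=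
  if l != 0%N then sb2 - sbc / (k.+1)%:R else 0.

Definition F_snowdrift (theta mub muc sb2 sc2 sbc : R) (d : nat) : R :=
  Fgen theta d (sd_muC mub muc) (sd_muD mub)
    (sd_sCC sb2 sc2 sbc) (sd_sCD sb2 sbc) (sd_sDD sb2).

End Defs.

From HB Require Import structures.
From mathcomp Require Import all_boot all_order all_algebra.
From mathcomp Require Import reals.
From mathcomp Require Import ring lra zify.
Import Order.TTheory GRing.Theory Num.Theory.
Local Open Scope ring_scope.

(* psi_n^k is the moment E[p^k (1 - p)^(n - k)] of p ~ Beta(theta, theta), hence
   satisfies the Pascal rule psi_n^k = psi_(n+1)^(k+1) + psi_(n+1)^k.  Binomial sums of
   it therefore collapse, sum_k C(n, k) psi_(n+m)^(k+a) = psi_m^a, and so do (by the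
   absorption identity) the same sums weighted by 1/(k+1).  This evaluates F_d in
   closed form:  d F_d = (sbc - muc)/2 + R_d + O(1/d)  with  |R_d| <= K (1 + theta) psi_d^0.
   Finally psi_N^0 -> 0: when m theta >= 1, Bernoulli's inequality bounds the m-th power
   of each factor (theta + j)/(2 theta + j) of psi_N^0 by (2 theta + j)/(2 theta + j + 1),
   and the product telescopes to (psi_N^0)^m <= 2 theta / (2 theta + N). *)

Lemma bernoulli_ineq (R : realDomainType) (a : R) (m : nat) :
  0 <= a <= 1 -> (1 - a) ^+ m * (1 + m%:R * a) <= 1.
Proof.
case/andP=> a_ge0 a_le1; elim: m => [|m IHm]; first by rewrite expr0 mul0r addr0 mulr1.
have step : (1 - a) * (1 + m.+1%:R * a) <= 1 + m%:R * a.
  by have := ler0n R m; rewrite -natr1; nra.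
rewrite exprSr -mulrA; apply: le_trans IHm; apply: ler_wpM2l => //.
by apply: exprn_ge0; lra.
Qed.

Lemma sum_binomS (R : pzSemiRingType) n (g : nat -> R) :
  \sum_(k < n.+2) 'C(n.+1, k)%:R * g k =
  \sum_(k < n.+1) 'C(n, k)%:R * (g k + g k.+1).
Proof.
rewrite big_ord_recl; under eq_bigr => k _ do rewrite /bump /= binS natrD mulrDl.
under [RHS]eq_bigr => k _ do rewrite mulrDr.
rewrite !big_split /= addrA; congr (_ + _).
rewrite [RHS]big_ord_recl [X in _ + X]big_ord_recr /= (@bin_small n n.+1) //.
rewrite mul0r addr0 !bin0.
by congr (_ + _); apply: eq_bigr.
Qed.

Lemma sum_binom_eq0 (R : pzSemiRingType) n (f : nat -> R) :
  \sum_(k < n.+1) 'C(n, k)%:R * ((k : nat) == 0%N)%:R * f k = f 0%N.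
Proof. by rewrite big_ord_recl big1 ?addr0 ?bin0 ?mul1r // => k _; rewrite mulr0 mul0r. Qed.

Lemma mulr_ge_oppr_norm_bound (R : realDomainType) (c x M : R) :
  - M <= x <= M -> - (`|c| * M) <= c * x.
Proof.
move=> xM; have : `|c * x| <= `|c| * M by rewrite normrM ler_wpM2l // ler_norml.
by rewrite ler_norml => /andP[].
Qed.

Lemma div_natr_eventually_lt (R : archiRealFieldType) (c e : R) :
  0 < e -> exists N0, forall n, (N0 <= n)%N -> c / n.+1%:R < e.
Proof.
move=> e_gt0; exists (Num.Def.archi_bound (`|c| / e)) => n le_N0n.
rewrite ltr_pdivrMr ?ltr0Sn //; apply: le_lt_trans (ler_norm c) _.
rewrite mulrC -ltr_pdivrMr //; apply: lt_le_trans (archi_boundP _) _.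
  by rewrite divr_ge0 // ltW.
by rewrite ler_nat leqW.
Qed.

Section Psi.
Variables (R : realType) (t : R).
Hypothesis t_gt0 : 0 < t.

Lemma prod_shift_gt0 (c : R) n : 0 < c -> 0 < \prod_(i < n) (c + i%:R).
Proof. by move=> c_gt0; apply: prodr_gt0 => i _; rewrite ltr_wpDr. Qed.

Lemma psi_gt0 n k : 0 < psi t n k.
Proof. by rewrite /psi divr_gt0 ?mulr_gt0 ?prod_shift_gt0 ?mulr_gt0. Qed.

Lemma psi_ge0 n k : 0 <= psi t n k.
Proof. exact/ltW/psi_gt0. Qed.

Lemma psi_pascal n k : (k <= n)%N -> psi t n k = psi t n.+1 k.+1 + psi t n.+1 k.
Proof.
move=> le_kn; rewrite /psi subSS subSn // !big_ord_recr /= natrB //.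
have den_gt0 : 0 < 2 * t + n%:R by rewrite ltr_wpDr // mulr_gt0.
have prod_gt0 : 0 < \prod_(l < n) (2 * t + l%:R) by rewrite prod_shift_gt0 ?mulr_gt0.
by field; rewrite !lt0r_neq0.
Qed.

(* The index equations are hypotheses so that the lemma rewrites sums whose indices
   are only arithmetically equal to [n + m] and [k + a], such as [(k + l).+2]. *)
Lemma sum_binom_psi n m a N (i : nat -> nat) :
  (a <= m)%N -> (n + m)%N = N -> (forall k, (k + a)%N = i k) ->
  \sum_(k < n.+1) 'C(n, k)%:R * psi t N (i k) = psi t m a.
Proof.
move=> le_am <- ei; under eq_bigr do rewrite -ei.
elim: n => [|n IHn]; first by rewrite big_ord1 bin0 mul1r.
rewrite (@sum_binomS _ n (fun k => psi t (n.+1 + m) (k + a))) -{}IHn.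
apply: eq_bigr => k _.
rewrite addSn [(k.+1 + a)%N]addSn addrC -psi_pascal //; have := ltn_ord k; lia.
Qed.

Lemma sum_binom_div_psi n m a N (i : nat -> nat) :
  (a <= m)%N -> (n + m.+1)%N = N -> (forall k, (k + a.+1)%N = i k) ->
  \sum_(k < n.+1) 'C(n, k)%:R / k.+1%:R * psi t N (i k) =
  (psi t m a - psi t N a) / n.+1%:R.
Proof.
move=> le_am eN ei.
rewrite -(@sum_binom_psi n.+1 m a N (addn^~ a)) //; last lia.
rewrite [in RHS]big_ord_recl bin0 mul1r /= addrC addKr mulr_suml.
apply: eq_bigr => k _.
rewrite /bump /= add1n addSnnS ei.
have absorb : 'C(n.+1, k.+1)%:R = n.+1%:R * 'C(n, k)%:R / k.+1%:R :> R.
  by rewrite -natrM (mul_bin_diag n.+1) natrM mulrAC divff ?mul1r ?pnatr_eq0.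
by rewrite absorb; field; rewrite !nat1r !pnatr_eq0.
Qed.

Lemma psi00 : psi t 0 0 = 1.
Proof. by rewrite /psi !big_ord0 mul1r divr1. Qed.

Lemma psi10 : psi t 1 0 = 2^-1.
Proof.
by rewrite /psi subn0 big_ord0 !big_ord1 mul1r !addr0; field; rewrite lt0r_neq0.
Qed.

Lemma psiS0 N : psi t N.+1 0 = psi t N 0 * ((t + N%:R) / (2 * t + N%:R)).
Proof.
rewrite /psi !subn0 !big_ord0 !mul1r !big_ord_recr /=.
have den_gt0 : 0 < 2 * t + N%:R by rewrite ltr_wpDr // mulr_gt0.
have prod_gt0 : 0 < \prod_(l < N) (2 * t + l%:R) by rewrite prod_shift_gt0 ?mulr_gt0.
by field; rewrite !lt0r_neq0.
Qed.

Lemma psiS1 N : psi t N.+1 1 = t / (2 * t + N%:R) * psi t N 0.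
Proof.
rewrite /psi subSS !subn0 big_ord1 big_ord0 mul1r addr0 [in LHS]big_ord_recr /=.
have den_gt0 : 0 < 2 * t + N%:R by rewrite ltr_wpDr // mulr_gt0.
have prod_gt0 : 0 < \prod_(l < N) (2 * t + l%:R) by rewrite prod_shift_gt0 ?mulr_gt0.
by field; rewrite !lt0r_neq0.
Qed.

Lemma psi0_le M N : (M <= N)%N -> psi t N 0 <= psi t M 0.
Proof.
apply: (@homo_leq _ (fun N => psi t N 0) (fun x y : R => y <= x)) => [x|y x z yx zy|i].
- exact: lexx.
- exact: le_trans zy yx.
- by rewrite [leRHS](@psi_pascal i 0) // lerDr psi_ge0.
Qed.

Lemma psi0_le1 N : psi t N 0 <= 1.
Proof. by rewrite -psi00 psi0_le. Qed.

Lemma natr_mul_psi1_le M N : (N <= M)%N -> N%:R * psi t M.+1 1 <= t * psi t N 0.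
Proof.
move=> le_NM; have den_gt0 : 0 < 2 * t + M%:R by rewrite ltr_wpDr // mulr_gt0.
have coef_le : N%:R * (t / (2 * t + M%:R)) <= t.
  rewrite mulrA ler_pdivrMr // mulrC ler_wpM2l ?(ltW t_gt0) //.
  by rewrite ler_wpDl ?mulr_ge0 ?ler_nat // ltW.
rewrite psiS1 mulrA; apply: ler_pM; rewrite ?psi_ge0 ?psi0_le //.
by rewrite mulr_ge0 ?ler0n ?divr_ge0 ?ltW.
Qed.

Lemma psi0_pow_le m N : 1 <= m%:R * t -> psi t N 0 ^+ m * (2 * t + N%:R) <= 2 * t.
Proof.
move=> mt_ge1; elim: N => [|N IHN]; first by rewrite psi00 expr1n mul1r addr0.
have den_gt0 : 0 < 2 * t + N%:R by rewrite ltr_wpDr // mulr_gt0.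
set a := t / (2 * t + N%:R).
have ratio : (t + N%:R) / (2 * t + N%:R) = 1 - a.
  by rewrite /a; field; rewrite lt0r_neq0.
have a01 : 0 <= a <= 1.
  rewrite /a divr_ge0 ?(ltW t_gt0) ?(ltW den_gt0) //= ler_pdivrMr // mul1r.
  by have := ler0n R N; lra.
have expand : (1 + m%:R * a) * (2 * t + N%:R) = 2 * t + N%:R + m%:R * t.
  by rewrite /a; field; rewrite lt0r_neq0.
have ratio_step : (1 - a) ^+ m * (2 * t + N.+1%:R) <= 2 * t + N%:R.
  apply: (@le_trans _ _ ((1 - a) ^+ m * ((1 + m%:R * a) * (2 * t + N%:R)))).
    rewrite expand ler_wpM2l ?exprn_ge0 -?natr1; lra.
  by rewrite mulrA -[leRHS]mul1r ler_wpM2r ?(ltW den_gt0) // bernoulli_ineq.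
rewrite psiS0 exprMn ratio -mulrA; apply: le_trans IHN.
by rewrite ler_wpM2l ?exprn_ge0 ?psi_ge0.
Qed.

Lemma psi0_eventually_lt (c e : R) :
  0 < e -> exists N0, forall N, (N0 <= N)%N -> c * psi t N 0 < e.
Proof.
move=> e_gt0; have [c_le0|c_gt0] := lerP c 0.
  by exists 0%N => N _; apply: le_lt_trans e_gt0; rewrite mulr_le0_ge0 ?psi_ge0.
pose m := Num.Def.archi_bound t^-1.
have mt_ge1 : 1 <= m%:R * t.
  by rewrite -ler_pdivrMr // div1r ltW // archi_boundP // invr_ge0 ltW.
pose d := e / c; have d_gt0 : 0 < d by rewrite divr_gt0.
have dm_gt0 : 0 < d ^+ m by rewrite exprn_gt0.
exists (Num.Def.archi_bound (2 * t / d ^+ m)) => N le_N0N.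
rewrite mulrC -ltr_pdivlMr // -/d ltNge; apply/negP => le_d_psi.
have large_N : 2 * t < d ^+ m * N%:R.
  rewrite [_ * N%:R]mulrC -ltr_pdivrMr //; apply: lt_le_trans (archi_boundP _) _.
    by rewrite divr_ge0 ?mulr_ge0 ?(ltW t_gt0) ?(ltW dm_gt0).
  by rewrite ler_nat.
have : d ^+ m * (2 * t + N%:R) <= psi t N 0 ^+ m * (2 * t + N%:R).
  rewrite ler_wpM2r ?addr_ge0 ?mulr_ge0 ?(ltW t_gt0) //.
  by rewrite lerXn2r // nnegrE ?psi_ge0 ?ltW.
have := @psi0_pow_le m N mt_ge1.
rewrite mulrDr; have := mulr_ge0 (ltW dm_gt0) (ltW t_gt0); lra.
Qed.

End Psi.

Section Snowdrift.
Variables (R : realType) (t mub muc sb2 sc2 sbc : R).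
Hypothesis t_gt0 : 0 < t.

Lemma sd_muC_sub_muD k :
  sd_muC mub muc k - sd_muD mub k = mub * (k == 0%N)%:R - muc / k.+1%:R.
Proof. by rewrite /sd_muC /sd_muD; case: k => [|k] /=; ring. Qed.

Lemma sd_sCC_sub_sCD k l :
  sd_sCC sb2 sc2 sbc k l - sd_sCD sb2 sbc k l =
  (sb2 - sbc / k.+1%:R) * (l == 0%N)%:R - sbc / l.+1%:R + sc2 / (k.+1%:R * l.+1%:R).
Proof. by rewrite /sd_sCC /sd_sCD; case: l => [|l] /=; rewrite invfM; ring. Qed.

Lemma sd_sDD_sub_sCD k l :
  sd_sDD sb2 k l - sd_sCD sb2 sbc k l =
  (1 - (l == 0%N)%:R) * (sbc / k.+1%:R - sb2 * (k == 0%N)%:R).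
Proof. by rewrite /sd_sDD /sd_sCD; case: k => [|k]; case: l => [|l] /=; ring. Qed.

Variable n : nat.
Local Notation D := (n.+1%:R : R).
Local Notation N := (2 * n.+1).+1%N.

Lemma snowdrift_mean_sum :
  \sum_(k < n.+1) 'C(n, k)%:R * psi t n.+2 k.+1 * (sd_muC mub muc k - sd_muD mub k) =
  mub * psi t n.+2 1 - muc * (psi t 1 0 - psi t n.+2 0) / D.
Proof.
transitivity (mub * \sum_(k < n.+1) 'C(n, k)%:R * ((k : nat) == 0%N)%:R * psi t n.+2 k.+1
  - muc * \sum_(k < n.+1) 'C(n, k)%:R / k.+1%:R * psi t n.+2 k.+1).
  by rewrite !mulr_sumr -sumrB; apply: eq_bigr => k _; rewrite sd_muC_sub_muD; ring.
rewrite (@sum_binom_eq0 _ n (fun k => psi t n.+2 k.+1)).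
rewrite (@sum_binom_div_psi _ _ t_gt0 n 1 0) //; first by rewrite mulrA.
all: by move=> *; lia.
Qed.

Lemma snowdrift_inner_sum (k : nat) : (k <= n)%N ->
  \sum_(l < n.+1) 'C(n, l)%:R *
    (- psi t N (k + l).+2 * (sd_sCC sb2 sc2 sbc k l - sd_sCD sb2 sbc k l)
     + psi t N (k + l).+1 * (sd_sDD sb2 k l - sd_sCD sb2 sbc k l)) =
  (sbc - sc2 / k.+1%:R) * (psi t n.+2 k.+1 - psi t N k.+1) / D
  - (sb2 - sbc / k.+1%:R) * psi t N k.+2
  + (sbc / k.+1%:R - sb2 * (k == 0%N)%:R) * (psi t n.+3 k.+1 - psi t N k.+1).
Proof.
move=> le_kn.
transitivity
  ((sbc - sc2 / k.+1%:R) * \sum_(l < n.+1) 'C(n, l)%:R / l.+1%:R * psi t N (k + l).+2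
  - (sb2 - sbc / k.+1%:R) *
    \sum_(l < n.+1) 'C(n, l)%:R * ((l : nat) == 0%N)%:R * psi t N (k + l).+2
  + (sbc / k.+1%:R - sb2 * (k == 0%N)%:R) *
    (\sum_(l < n.+1) 'C(n, l)%:R * psi t N (k + l).+1
     - \sum_(l < n.+1) 'C(n, l)%:R * ((l : nat) == 0%N)%:R * psi t N (k + l).+1)).
  rewrite -sumrB !mulr_sumr -sumrB -big_split /=; apply: eq_bigr => l _.
  by rewrite sd_sCC_sub_sCD sd_sDD_sub_sCD; field; rewrite !nat1r !pnatr_eq0.
rewrite (@sum_binom_eq0 _ n (fun l => psi t N (k + l).+2)).
rewrite (@sum_binom_eq0 _ n (fun l => psi t N (k + l).+1)) !addn0.
rewrite (@sum_binom_div_psi _ _ t_gt0 n n.+2 k.+1 N (fun l => (k + l).+2)) //.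
rewrite (@sum_binom_psi _ _ t_gt0 n n.+3 k.+1 N (fun l => (k + l).+1)) //.
  by rewrite mulrA.
all: by move=> *; lia.
Qed.

Lemma snowdrift_var_sum :
  \sum_(k < n.+1) \sum_(l < n.+1) 'C(n, k)%:R * 'C(n, l)%:R *
    (- psi t N (k + l).+2 * (sd_sCC sb2 sc2 sbc k l - sd_sCD sb2 sbc k l)
     + psi t N (k + l).+1 * (sd_sDD sb2 k l - sd_sCD sb2 sbc k l)) =
  (sbc * (psi t 2 1 - psi t n.+3 1)
   - sc2 * (psi t 1 0 - 2 * psi t n.+2 0 + psi t N 0) / D) / D
  - sb2 * psi t n.+3 2 + sbc * (psi t n.+2 1 - psi t N 1) / D
  + sbc * (psi t 2 0 - psi t n.+3 0 - psi t n.+2 0 + psi t N 0) / D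
  - sb2 * (psi t n.+3 1 - psi t N 1).
Proof.
under eq_bigr => k _ do under eq_bigr => l _ do rewrite -mulrA.
under eq_bigr => k _ do rewrite -mulr_sumr (@snowdrift_inner_sum k (ltn_ord k)).
transitivity (sbc / D * (\sum_(k < n.+1) 'C(n, k)%:R * psi t n.+2 k.+1
                        - \sum_(k < n.+1) 'C(n, k)%:R * psi t N k.+1)
  - sc2 / D * (\sum_(k < n.+1) 'C(n, k)%:R / k.+1%:R * psi t n.+2 k.+1
              - \sum_(k < n.+1) 'C(n, k)%:R / k.+1%:R * psi t N k.+1)
  - sb2 * \sum_(k < n.+1) 'C(n, k)%:R * psi t N k.+2
  + sbc * \sum_(k < n.+1) 'C(n, k)%:R / k.+1%:R * psi t N k.+2
  + sbc * (\sum_(k < n.+1) 'C(n, k)%:R / k.+1%:R * psi t n.+3 k.+1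
           - \sum_(k < n.+1) 'C(n, k)%:R / k.+1%:R * psi t N k.+1)
  - sb2 * (\sum_(k < n.+1) 'C(n, k)%:R * ((k : nat) == 0%N)%:R * psi t n.+3 k.+1
           - \sum_(k < n.+1) 'C(n, k)%:R * ((k : nat) == 0%N)%:R * psi t N k.+1)).
  rewrite -!sumrB !mulr_sumr -!(sumrB, big_split); apply: eq_bigr => k _ /=; ring.
rewrite (@sum_binom_eq0 _ n (fun k => psi t n.+3 k.+1)).
rewrite (@sum_binom_eq0 _ n (fun k => psi t N k.+1)).
rewrite (@sum_binom_psi _ _ t_gt0 n 2 1 n.+2) ?(@sum_binom_psi _ _ t_gt0 n n.+3 1 N) //.
rewrite (@sum_binom_psi _ _ t_gt0 n n.+3 2 N (fun k => k.+2)) //.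
rewrite (@sum_binom_div_psi _ _ t_gt0 n 1 0 n.+2) //.
rewrite (@sum_binom_div_psi _ _ t_gt0 n n.+2 0 N) //.
rewrite (@sum_binom_div_psi _ _ t_gt0 n n.+2 1 N (fun k => k.+2)) //.
rewrite (@sum_binom_div_psi _ _ t_gt0 n 2 0 n.+3) //.
  by field; rewrite nat1r pnatr_eq0.
all: by move=> *; lia.
Qed.

Definition snowdrift_remainder : R :=
  muc * psi t n.+2 0 + mub * (D * psi t n.+2 1)
  + sbc * (psi t n.+2 1 - psi t n.+3 1 - psi t N 1
           - psi t n.+2 0 - psi t n.+3 0 + psi t N 0)
  - sb2 * (D * (psi t n.+3 2 + psi t n.+3 1 - psi t N 1)).

Lemma snowdrift_scaled :
  D * F_snowdrift t mub muc sb2 sc2 sbc n.+1 =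
  (sbc - muc) / 2 + snowdrift_remainder
  + sc2 * (2 * psi t n.+2 0 - psi t N 0 - 2^-1) / D.
Proof.
have psi21 : psi t 2 1 = 2^-1 - psi t 2 0.
  by rewrite -(@psi10 _ _ t_gt0) (@psi_pascal _ _ t_gt0 1 0) // addrK.
rewrite /F_snowdrift /Fgen /= snowdrift_mean_sum snowdrift_var_sum psi10 // psi21.
by rewrite /snowdrift_remainder; field; rewrite nat1r pnatr_eq0.
Qed.

Lemma snowdrift_remainder_ge :
  - ((`|muc| + `|mub| + 2 * `|sbc| + 2 * `|sb2|) * ((1 + t) * psi t n.+1 0))
  <= snowdrift_remainder.
Proof.
set p := psi t n.+1 0.
have p_ge0 : 0 <= p by rewrite psi_ge0.
have le_pB : p <= (1 + t) * p by rewrite mulrDl mul1r lerDl mulr_ge0 // ltW.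
have le_tpB : t * p <= (1 + t) * p by rewrite mulrDl mul1r lerDr.
have psi0_bounds M : (n.+1 <= M)%N -> 0 <= psi t M 0 <= p.
  by move=> le_nM; rewrite psi_ge0 ?psi0_le.
have psi1_bounds M : (n.+1 <= M)%N ->
    [&& 0 <= psi t M.+1 1, psi t M.+1 1 <= D * psi t M.+1 1 & D * psi t M.+1 1 <= t * p].
  move=> le_nM; rewrite psi_ge0 // natr_mul_psi1_le // andbT.
  by rewrite ler_peMl ?psi_ge0 // ler1n.
have /andP[a1_ge0 a1_le] := @psi0_bounds n.+2 (leqnSn _).
have /andP[a2_ge0 a2_le] := @psi0_bounds n.+3 (leqW (leqnSn _)).
have /andP[a3_ge0 a3_le] := @psi0_bounds N ltac:(lia).
have /and3P[x2_ge0 x2_le x2_le'] := @psi1_bounds n.+1 (leqnn _).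
have /and3P[x1_ge0 x1_le x1_le'] := @psi1_bounds n.+2 (leqnSn _).
have le_n_2n : (n.+1 <= 2 * n.+1)%N by rewrite leq_pmull.
have /and3P[x3_ge0 x3_le x3_le'] := @psi1_bounds (2 * n.+1) le_n_2n.
have y_le : D * psi t n.+3 2 <= D * psi t n.+2 1.
  by rewrite ler_wpM2l // (@psi_pascal _ _ t_gt0 n.+2 1) // lerDl psi_ge0.
have y_ge0 : 0 <= D * psi t n.+3 2 by rewrite mulr_ge0 ?psi_ge0.
have bound := @mulr_ge_oppr_norm_bound R.
have := bound muc (psi t n.+2 0) ((1 + t) * p) ltac:(apply/andP; split; lra).
have := bound mub (D * psi t n.+2 1) ((1 + t) * p) ltac:(apply/andP; split; lra).
have := bound sbc (psi t n.+2 1 - psi t n.+3 1 - psi t N 1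
  - psi t n.+2 0 - psi t n.+3 0 + psi t N 0) (2 * ((1 + t) * p))
  ltac:(apply/andP; split; lra).
have := bound (- sb2) (D * (psi t n.+3 2 + psi t n.+3 1 - psi t N 1)) (2 * ((1 + t) * p))
  ltac:(apply/andP; split; lra).
rewrite /snowdrift_remainder normrN; lra.
Qed.

Lemma snowdrift_scaled_ge :
  (sbc - muc) / 2
  - (`|muc| + `|mub| + 2 * `|sbc| + 2 * `|sb2|) * ((1 + t) * psi t n.+1 0)
  - 2 * `|sc2| / D <= D * F_snowdrift t mub muc sb2 sc2 sbc n.+1.
Proof.
rewrite snowdrift_scaled.
have /andP[a1_ge0 a1_le1] : 0 <= psi t n.+2 0 <= 1 by rewrite psi_ge0 ?psi0_le1.
have /andP[a3_ge0 a3_le1] : 0 <= psi t N 0 <= 1 by rewrite psi_ge0 ?psi0_le1.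
have sc2_bound : - (`|sc2| * 2) / D <= sc2 * (2 * psi t n.+2 0 - psi t N 0 - 2^-1) / D.
  by rewrite ler_wpM2r ?invr_ge0 ?ler0n // mulr_ge_oppr_norm_bound //; lra.
(* [lra] fails on inverses of non-constant terms unless they are named. *)
have := snowdrift_remainder_ge; set inv_D := D^-1 in sc2_bound *; lra.
Qed.

End Snowdrift.

Theorem mainTheorem7 (R : realType) (theta mub muc sb2 sc2 sbc : R) :
  0 < theta -> muc < sbc ->
  exists d0 : nat, (2 <= d0)%N /\
    forall d : nat, (d0 <= d)%N -> 0 < F_snowdrift theta mub muc sb2 sc2 sbc d.
Proof.
move=> theta_gt0 muc_lt_sbc.
have quarter_gt0 : 0 < (sbc - muc) / 4 by rewrite divr_gt0 ?subr_gt0.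
have [N1 psi_small] := @psi0_eventually_lt _ _ theta_gt0
  ((`|muc| + `|mub| + 2 * `|sbc| + 2 * `|sb2|) * (1 + theta)) _ quarter_gt0.
have [N2 inv_small] := @div_natr_eventually_lt _ (2 * `|sc2|) _ quarter_gt0.
exists (maxn N1 N2).+2; split=> // [[//|n]]; rewrite ltnS => /ltnW.
rewrite geq_max => /andP[le_N1n le_N2n].
have := @snowdrift_scaled_ge _ _ mub muc sb2 sc2 sbc theta_gt0 n.
have := psi_small n.+1 (leqW le_N1n); have := inv_small n le_N2n.
rewrite -(pmulr_rgt0 _ (ltr0Sn R n)).
set inv_d := n.+1%:R^-1; lra.
Qed.
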